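(* Let $R$ be a finite commutative local Frobenius ring with residue field $\mathbb{F}_q$, and let $\ell$ be a nonnegative integer. For $i=1,2$, let $C_i$ be a linear code of length $n$ over $R$ with generator matrix $\mathrm{G}_i$ and parity check matrix $\mathrm{H}_i$. Then $\{C_1,C_2\}$ is an $\ell$-DLIP if and only if $\texttt{Rank}_q(\mathrm{H}_2\mathrm{G}_1^\top)=\texttt{Rank}_q(\mathrm{G}_1)-\ell$ or $\texttt{Rank}_q(\mathrm{H}_1\mathrm{G}_2^\top)=\texttt{Rank}_q(\mathrm{G}_2)-\ell$.
   Context: A linear code of length $n$ over $R$ is an $R$-submodule of $R^n$; $\dim(C):=\log_q|C|$. A pair $\{C,D\}$ of linear codes is an $\ell$-DLIP ($\ell$-dimension linear intersection pair) if $\dim(C\cap D)=\ell$. A generator matrix of $C$ is a matrix whose rows generate $C$; a parity check matrix of $C$ is a generator matrix of $C^\perp$ with respect to the standard inner product $\sum_j u_jc_j$. For a matrix $\mathrm{A}$ over $R$, $\texttt{Rank}_q(\mathrm{A}):=\log_q|M|$ where $M$ is the $R$-submodule spanned by the rows of $\mathrm{A}$. *)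

From Stdlib Require Import Reals.
From mathcomp Require Import all_boot all_order all_algebra.
Set Implicit Arguments. Unset Strict Implicit. Unset Printing Implicit Defensive.
Import GRing.Theory.
Local Open Scope ring_scope.

Section Defs.
Variable R : finComUnitRingType.

Definition is_ideal (I : {set R}) : Prop :=
  0 \in I /\ (forall x y, x \in I -> y \in I -> x + y \in I)
  /\ (forall r x, x \in I -> r * x \in I).

Definition is_maximal_ideal (M : {set R}) : Prop :=
  is_ideal M /\ M != setT /\
  (forall J, is_ideal J -> M \subset J -> J = M \/ J = setT).

Definition local_with (M : {set R}) : Prop :=
  forall J, is_maximal_ideal J <-> J = M.

Definition ann (S : {set R}) : {set R} := [set r | [forall x in S, r * x == 0]].

Definition is_minimal_ideal (I : {set R}) : Prop :=
  is_ideal I /\ I != [set 0] /\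
  (forall J, is_ideal J -> J \subset I -> J = [set 0] \/ J = I).

(* A finite commutative local ring with maximal ideal M is Frobenius iff its
   socle soc(R) = ann(M) is isomorphic to R/M, i.e. is a simple module,
   i.e. a minimal ideal. *)
Definition local_frobenius (M : {set R}) : Prop :=
  local_with M /\ is_minimal_ideal (ann M).

Definition is_linear_code n (C : {set 'rV[R]_n}) : Prop :=
  0 \in C /\ (forall x y, x \in C -> y \in C -> x + y \in C)
  /\ (forall r x, x \in C -> r *: x \in C).

Definition rowspan k n (A : 'M[R]_(k, n)) : {set 'rV[R]_n} :=
  [set u *m A | u : 'rV[R]_k].

Definition dual_code n (C : {set 'rV[R]_n}) : {set 'rV[R]_n} :=
  [set u : 'rV[R]_n | [forall c in C, (\sum_(j < n) u 0 j * c 0 j) == 0]].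

Definition is_generator_matrix k n (G : 'M[R]_(k, n)) (C : {set 'rV[R]_n}) :=
  rowspan G = C.

Definition is_parity_check_matrix k n (H : 'M[R]_(k, n)) (C : {set 'rV[R]_n}) :=
  rowspan H = dual_code C.

Definition logq (q : nat) (m : nat) : Rdefinitions.R :=
  Rdiv (Rpower.ln (INR m)) (Rpower.ln (INR q)).

Definition dimq (q : nat) n (C : {set 'rV[R]_n}) : Rdefinitions.R := logq q #|C|.

Definition Rankq (q : nat) k n (A : 'M[R]_(k, n)) : Rdefinitions.R :=
  logq q #|rowspan A|.

Definition DLIP (q : nat) n (l : nat) (C D : {set 'rV[R]_n}) : Prop :=
  dimq q (C :&: D) = INR l.

End Defs.

(* Over a finite local Frobenius ring R with maximal ideal M, a linear code C
   satisfies |C| |C^perp| = |R^n|.  The key count is |Hom_R(B/A, R)| |A| <= |B|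
   for codes A <= B: adjoin to A a vector b of B with M b <= A; evaluation at b
   maps Hom(B/A, R) into ann M with fibres of size |Hom(B/(A + R b), R)|, while
   |A + R b| >= |ann M| |A| because ann M is a simple, hence cyclic, ideal.
   Applied to C^perp <= R^n and 0 <= C it gives both halves of the duality.
   Now put S = C1 + C2.  The map h |-> h G1^T sends C2^perp onto the row span of
   H2 G1^T with kernel C1^perp :&: C2^perp = S^perp, so that span has size
   |C2^perp| / |S^perp| = |S| / |C2| = |C1| / |C1 :&: C2|, and taking
   logarithms yields Rank_q(H2 G1^T) = Rank_q(G1) - dim(C1 :&: C2). *)

From Stdlib Require Import Reals Lra.
From mathcomp Require Import all_boot all_order all_algebra zify.
Set Implicit Arguments. Unset Strict Implicit. Unset Printing Implicit Defensive.
Import GRing.Theory.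
Local Open Scope ring_scope.

Lemma card_uniform_fibres (T U : finType) (D : {set T}) (f : T -> U) k :
  (forall x, x \in D -> #|[set y in D | f y == f x]| = k) ->
  #|D| = (#|f @: D| * k)%N.
Proof.
move=> fibre_k; rewrite -sum1_card (partition_big_imset f) /= -sum_nat_const.
apply: eq_bigr => _ /imsetP [x xD ->]; rewrite -(fibre_k x xD) -sum1_card.
by apply: eq_bigl => y; rewrite inE.
Qed.

Lemma card_by_kernel (V : finZmodType) (U : finType) (D K : {set V}) (f : V -> U) :
  (forall x y, x \in D -> y \in D -> x + y \in D) -> K \subset D ->
  (forall x y, x \in D -> y \in D -> (f y == f x) = (y - x \in K)) ->
  #|D| = (#|f @: D| * #|K|)%N.
Proof.
move=> addD sKD fE; apply: card_uniform_fibres => x xD.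
have -> : [set y in D | f y == f x] = (+%R^~ x) @: K.
  apply/setP => y; rewrite inE; apply/andP/imsetP => [[yD] | [z zK ->]].
    by rewrite fE // => yxK; exists (y - x); rewrite ?subrK.
  have zxD : z + x \in D by rewrite addD // (subsetP sKD).
  by rewrite fE // addrK.
by apply: card_imset; apply: addIr.
Qed.

Section Ideals.
Variable R : finComUnitRingType.

Lemma ideal_eqT (I : {set R}) : is_ideal I -> 1 \in I -> I = setT.
Proof.
move=> [_ [_ mulI]] I1; apply/setP => r; rewrite inE -(mulr1 r); exact: mulI.
Qed.

Lemma principal_ideal (x : R) : is_ideal [set r * x | r : R].
Proof.
split; first by apply/imsetP; exists 0; rewrite ?mul0r.
split=> [_ _ /imsetP [r _ ->] /imsetP [r' _ ->] | r _ /imsetP [r' _ ->]].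
  by apply/imsetP; exists (r + r'); rewrite ?mulrDl.
by apply/imsetP; exists (r * r'); rewrite ?mulrA.
Qed.

Lemma ann_mulr (S : {set R}) s x : s \in ann S -> x \in S -> s * x = 0.
Proof. by rewrite inE => /forall_inP sS xS; apply/eqP; apply: sS. Qed.

Definition idealb (I : {set R}) : bool :=
  [&& 0 \in I, [forall x in I, forall y in I, x + y \in I]
    & [forall r, forall x in I, r * x \in I]].

Lemma idealP (I : {set R}) : reflect (is_ideal I) (idealb I).
Proof.
apply: (iffP and3P) => [[I0 /forall_inP addI /forallP mulI] | [I0 [addI mulI]]].
  split=> //; split=> [x y xI | r]; first exact: (forall_inP (addI x xI)).
  exact: (forall_inP (mulI r)).
split=> //; first by apply/forall_inP => x xI; apply/forall_inP => y; apply: addI.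
by apply/forallP => r; apply/forall_inP; apply: mulI.
Qed.

Section Local.
Variable M : {set R}.
Hypothesis localM : local_with M.

Lemma proper_ideal_subM (I : {set R}) : is_ideal I -> 1 \notin I -> I \subset M.
Proof.
move=> idI I1.
pose P := [pred J : {set R} | [&& idealb J, I \subset J & 1 \notin J]].
have PI : P I by apply/and3P; split=> //; apply/idealP.
case: (arg_maxnP (fun J : {set R} => #|J|) PI) => J /and3P [/idealP idJ sIJ J1] Jmax.
suff /localM <- : is_maximal_ideal J by [].
split=> //; split; first by apply: contraNneq J1 => ->; rewrite inE.
move=> K idK sJK; have [K1 | K1] := boolP (1 \in K); first by right; apply: ideal_eqT.
left; apply/esym/eqP; rewrite eqEcard sJK; apply: Jmax.
by apply/and3P; split=> //; [apply/idealP | apply: subset_trans sJK].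
Qed.

Lemma M_ideal : is_ideal M.
Proof. by have [] := (localM M).2 erefl. Qed.

Lemma one_notin_M : 1 \notin M.
Proof.
have [_ [MT _]] := (localM M).2 erefl.
by apply: contra MT => M1; rewrite (ideal_eqT M_ideal M1).
Qed.

Lemma nonunit_in_M x : x \isn't a GRing.unit -> x \in M.
Proof.
move=> xU; have Rx1 : 1 \notin [set r * x | r : R].
  by apply: contra xU => /imsetP [r _ rx1]; apply/unitrPr; exists r; rewrite mulrC -rx1.
apply: (subsetP (proper_ideal_subM (principal_ideal x) Rx1)).
by apply/imsetP; exists 1; rewrite ?mul1r.
Qed.

Lemma unit_1BM y : y \in M -> 1 - y \is a GRing.unit.
Proof.
move=> yM; apply: contraR one_notin_M => /nonunit_in_M yM'.
by rewrite -(subrK y 1); apply: M_ideal.2.1.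
Qed.

Lemma M_nilpotent m : m \in M -> exists k, m ^+ k = 0.
Proof.
move=> mM.
have [i [j [lt_ij eq_ij]]] : exists i j, (i < j)%N /\ m ^+ i = m ^+ j.
  have /injectivePn [i [j neq_ij eq_ij]] : ~~ injectiveb (fun i : 'I_#|R|.+1 => m ^+ i).
    by apply/negP => /injectiveP/leq_card; rewrite card_ord ltnn.
  have [lt_ij | lt_ji | /val_inj eqij] := ltngtP i j.
  - by exists i, j.
  - by exists j, i.
  - by rewrite eqij eqxx in neq_ij.
exists i; have ji_gt0 : (0 < j - i)%N by rewrite subn_gt0.
have mjiM : m ^+ (j - i) \in M.
  by rewrite -(prednK ji_gt0) exprSr; apply: M_ideal.2.2.
apply: (mulIr (unit_1BM mjiM)).
by rewrite mul0r mulrBr mulr1 -exprD subnKC ?(ltnW lt_ij) // eq_ij subrr.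
Qed.

End Local.

Lemma ann_principal (M : {set R}) :
  is_minimal_ideal (ann M) -> exists2 s, s != 0 & ann M = [set r * s | r : R].
Proof.
move=> [[ann0 _] [ann_neq0 annmin]].
have [s sann s0] : exists2 s, s \in ann M & s != 0.
  apply/exists_inP; apply: contraNT ann_neq0 => /exists_inPn annE.
  apply/eqP/setP => x; rewrite in_set1; apply/idP/eqP => [xann | ->//].
  by apply/eqP; have := annE x xann; rewrite negbK.
exists s => //.
have sub_ann : [set r * s | r : R] \subset ann M.
  apply/subsetP => _ /imsetP [r _ ->]; rewrite inE; apply/forall_inP => x xM.
  by rewrite -mulrA (ann_mulr sann xM) mulr0.
have [rs0 | //] := annmin _ (principal_ideal s) sub_ann.
have : s \in [set r * s | r : R] by apply/imsetP; exists 1; rewrite ?mul1r.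
by rewrite rs0 inE (negPf s0).
Qed.

End Ideals.

Section Modules.
Variables (R : finComUnitRingType) (n : nat).
Local Notation V := 'rV[R]_n.

Lemma code_sub (C : {set V}) x y :
  is_linear_code C -> x \in C -> y \in C -> x - y \in C.
Proof. by move=> [_ [addC scaleC]] xC yC; rewrite -scaleN1r addC ?scaleC. Qed.

Definition colon (A : {set V}) (b : V) : {set R} := [set r | r *: b \in A].

Lemma colon_ideal (A : {set V}) b : is_linear_code A -> is_ideal (colon A b).
Proof.
move=> [A0 [addA scaleA]]; split; first by rewrite inE scale0r.
by split=> [r s | r s]; rewrite !inE ?scalerDl -?scalerA; [apply: addA | apply: scaleA].
Qed.

Definition adjoin (A : {set V}) (b : V) : {set V} :=
  [set x | [exists r : R, x - r *: b \in A]].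

Lemma adjoinP (A : {set V}) b x :
  reflect (exists r, x - r *: b \in A) (x \in adjoin A b).
Proof. by rewrite inE; apply: existsP. Qed.

Lemma adjoin_code (A : {set V}) b : is_linear_code A -> is_linear_code (adjoin A b).
Proof.
move=> [A0 [addA scaleA]].
split; first by apply/adjoinP; exists 0; rewrite scale0r subr0.
split=> [x y /adjoinP [r xA] /adjoinP [s yA] | t x /adjoinP [r xA]]; apply/adjoinP.
  by exists (r + s); rewrite scalerDl opprD addrACA addA.
by exists (t * r); rewrite -scalerA -scalerBr scaleA.
Qed.

Lemma sub_adjoin (A : {set V}) b : A \subset adjoin A b.
Proof. by apply/subsetP => x xA; apply/adjoinP; exists 0; rewrite scale0r subr0. Qed.

Lemma mem_adjoin (A : {set V}) b : is_linear_code A -> b \in adjoin A b.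
Proof. by move=> codeA; apply/adjoinP; exists 1; rewrite scale1r subrr codeA.1. Qed.

Lemma adjoin_sub (A B : {set V}) b :
  is_linear_code B -> A \subset B -> b \in B -> adjoin A b \subset B.
Proof.
move=> [_ [addB scaleB]] sAB bB; apply/subsetP => x /adjoinP [r xA].
rewrite -(subrK (r *: b) x); apply: addB; [exact: (subsetP sAB) | exact: scaleB].
Qed.

Definition form_on (B : {set V}) (f : {ffun V -> R}) : bool :=
  [&& [forall x in B, forall y in B, f (x + y) == f x + f y],
      [forall r, forall x in B, f (r *: x) == r * f x]
    & [forall x in ~: B, f x == 0]].

(* Hom_R(B/A, R): the linear forms on B that vanish on A, extended by 0 off B
   so that they form a finite set of functions on V. *)
Definition forms (B A : {set V}) : {set {ffun V -> R}} :=
  [set f | form_on B f && [forall x in A, f x == 0]].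

Lemma formsP (B A : {set V}) (f : {ffun V -> R}) :
  reflect [/\ forall x y, x \in B -> y \in B -> f (x + y) = f x + f y,
              forall r x, x \in B -> f (r *: x) = r * f x,
              forall x, x \notin B -> f x = 0
            & forall x, x \in A -> f x = 0]
          (f \in forms B A).
Proof.
rewrite inE; apply: (iffP andP) => [[/and3P [/forall_inP fD /forallP fZ /forall_inP f0]]
                                     /forall_inP fA | [fD fZ f0 fA]].
  split=> [x y xB yB | r x xB | x xB | x xA]; apply/eqP.
  - exact: (forall_inP (fD x xB)).
  - exact: (forall_inP (fZ r)).
  - by apply: f0; rewrite inE.
  - exact: fA.
split; last by apply/forall_inP => x /fA ->.
apply/and3P; split.
- by apply/forall_inP => x xB; apply/forall_inP => y yB; rewrite fD.
- by apply/forallP => r; apply/forall_inP => x xB; rewrite fZ.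
- by apply/forall_inP => x; rewrite inE => /f0 ->.
Qed.

Lemma forms_sub0 (B A : {set V}) :
  B \subset A -> forms B A \subset [set 0 : {ffun V -> R}].
Proof.
move=> sBA; apply/subsetP => f /formsP [_ _ f0 fA]; rewrite inE.
apply/eqP/ffunP => x; rewrite ffunE.
by have [/(subsetP sBA)/fA | /f0] := boolP (x \in B).
Qed.

Lemma formsB_adjoin (B A : {set V}) b (f g : {ffun V -> R}) :
  is_linear_code B -> A \subset B -> b \in B ->
  f \in forms B A -> g \in forms B A -> f b = g b -> f - g \in forms B (adjoin A b).
Proof.
move=> [_ [addB scaleB]] sAB bB /formsP [fD fZ f0 fA] /formsP [gD gZ g0 gA] fgb.
apply/formsP; split=> [x y xB yB | r x xB | x xB | x /adjoinP [r xA]]; rewrite !ffunE.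
- by rewrite fD // gD // opprD addrACA.
- by rewrite fZ // gZ // mulrBr.
- by rewrite f0 // g0 // subrr.
have xrbB : x - r *: b \in B by apply: (subsetP sAB).
have rbB : r *: b \in B by apply: scaleB.
by rewrite -(subrK (r *: b) x) fD // gD // fA // gA // fZ // gZ // fgb subrr.
Qed.

Lemma card_forms_adjoin (M : {set R}) (B A : {set V}) b :
  is_linear_code B -> A \subset B -> b \in B ->
  (forall m, m \in M -> m *: b \in A) ->
  (#|forms B A| <= #|ann M| * #|forms B (adjoin A b)|)%N.
Proof.
move=> codeB sAB bB Mb.
pose lift t := odflt 0 [pick g in forms B A | g b == t].
have liftP f : f \in forms B A -> lift (f b) \in forms B A /\ lift (f b) b = f b.
  move=> fF; rewrite /lift; case: pickP => [g /andP [gF /eqP] | /(_ f)] //.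
  by rewrite fF eqxx.
pose split_form (f : {ffun V -> R}) := (f b, f - lift (f b)).
have split_inj : {in forms B A &, injective split_form}.
  by move=> f g _ _ [fgb]; rewrite fgb => /addIr.
rewrite -(card_in_imset split_inj) -cardsX; apply: subset_leq_card.
apply/subsetP => _ /imsetP [f fF ->]; have [liftF liftb] := liftP f fF.
rewrite inE /=; apply/andP; split; last exact: formsB_adjoin.
move/formsP: fF => [_ fZ _ fA].
by rewrite inE; apply/forall_inP => m Mm; rewrite mulrC -fZ // fA ?Mb.
Qed.

Section LocalFrobenius.
Variable M : {set R}.
Hypothesis localM : local_with M.

(* Take b of maximal conductor colon A b: if m b were outside A, the conductor of
   m b could not be larger, so the powers m^j b would all stay outside A. *)
Lemma exists_annM_vector (A B : {set V}) :
  is_linear_code A -> is_linear_code B -> ~~ (B \subset A) ->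
  exists b, [/\ b \in B, b \notin A & forall m, m \in M -> m *: b \in A].
Proof.
move=> codeA [_ [_ scaleB]] /subsetPn [b0 b0B b0A].
pose BnotA := [pred b | (b \in B) && (b \notin A)].
have b0BA : BnotA b0 by rewrite /= b0B b0A.
case: (arg_maxnP (fun b => #|colon A b|) b0BA) => b /andP [bB bA] bmax.
exists b; split=> // m Mm; apply: contraT => mbA.
have sub_colon : colon A b \subset colon A (m *: b).
  by apply/subsetP => r; rewrite !inE scalerA mulrC -scalerA; apply: codeA.2.2.
have colonE : colon A (m *: b) = colon A b.
  apply/esym/eqP; rewrite eqEcard sub_colon; apply: bmax.
  by rewrite /= mbA scaleB.
have mjbA j : m ^+ j *: b \notin A.
  elim: j => [|j IHj]; first by rewrite scale1r.
  rewrite exprSr -scalerA; apply: contra IHj => mjmbA.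
  have : m ^+ j \in colon A (m *: b) by rewrite inE.
  by rewrite colonE inE.
have [k mk0] := M_nilpotent localM Mm.
by have := mjbA k; rewrite mk0 scale0r codeA.1.
Qed.

Lemma colon_subM (A : {set V}) b :
  is_linear_code A -> b \notin A -> colon A b \subset M.
Proof.
move=> codeA bA; apply: proper_ideal_subM => //; first exact: colon_ideal.
by rewrite inE scale1r.
Qed.

Hypothesis annM_minimal : is_minimal_ideal (ann M).

Lemma card_adjoin (A : {set V}) b :
  is_linear_code A -> b \notin A -> (#|ann M| * #|A| <= #|adjoin A b|)%N.
Proof.
move=> codeA bA; have [s s0 annE] := ann_principal annM_minimal.
have s_ann : s \in ann M by rewrite annE; apply/imsetP; exists 1; rewrite ?mul1r.
pose coef t := odflt 0 [pick r | r * s == t].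
have coefK t : t \in ann M -> coef t * s = t.
  rewrite annE => /imsetP [r _ ->].
  by rewrite /coef; case: pickP => [r' /eqP // | /(_ r)]; rewrite eqxx.
pose lift (p : R * V) := p.2 + coef p.1 *: b.
have lift_inj : {in setX (ann M) A &, injective lift}.
  move=> [t a] [t' a'] /setXP [tM aA] /setXP [t'M a'A].
  rewrite /lift /= => eq_lift.
  have coef_colon : coef t - coef t' \in colon A b.
    rewrite inE scalerBl.
    suff -> : coef t *: b - coef t' *: b = a' - a by rewrite code_sub.
    by apply/eqP; rewrite subr_eq addrAC -eq_lift addrAC subrr add0r.
  have eq_tt' : t = t'.
    rewrite -(coefK t tM) -(coefK t' t'M); apply/eqP; rewrite -subr_eq0 -mulrBl.
    by rewrite mulrC (ann_mulr s_ann) ?(subsetP (colon_subM codeA bA)).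
  by move: eq_lift; rewrite eq_tt' => /addIr ->.
rewrite -cardsX -(card_in_imset lift_inj); apply: subset_leq_card.
apply/subsetP => _ /imsetP [[t a] /setXP [_ aA] ->].
by apply/adjoinP; exists (coef t); rewrite addrK.
Qed.

Lemma card_forms_le (A B : {set V}) :
  is_linear_code A -> is_linear_code B -> A \subset B ->
  (#|forms B A| * #|A| <= #|B|)%N.
Proof.
move=> + codeB; have [k] := ubnP (#|B| - #|A|).
elim: k A => // k IHk A ltBA codeA sAB.
have [sBA | /(exists_annM_vector codeA codeB) [b [bB bA Mb]]] := boolP (B \subset A).
  have := subset_leq_card (forms_sub0 sBA); rewrite cards1 => le_forms1.
  by rewrite (leq_trans (leq_mul le_forms1 (leqnn _))) // mul1n subset_leq_card.
have sA'B := adjoin_sub codeB sAB bB.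
have ltAA' : (#|A| < #|adjoin A b|)%N.
  apply/proper_card/properP; split; first exact: sub_adjoin.
  by exists b; rewrite ?mem_adjoin.
have le_A'B := subset_leq_card sA'B.
have IH' : (#|forms B (adjoin A b)| * #|adjoin A b| <= #|B|)%N.
  by apply: IHk (adjoin_code b codeA) sA'B; lia.
apply: leq_trans IH'.
apply: leq_trans (leq_mul (card_forms_adjoin codeB sAB bB Mb) (leqnn #|A|)) _.
by rewrite mulnAC mulnC leq_mul2l card_adjoin ?orbT.
Qed.

End LocalFrobenius.
End Modules.

Section DualCode.
Variables (R : finComUnitRingType) (n : nat).
Local Notation V := 'rV[R]_n.

Definition dot (u c : V) : R := (u *m c^T) 0 0.

Lemma dual_codeP (C : {set V}) u :
  reflect (forall c, c \in C -> dot u c = 0) (u \in dual_code C).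
Proof.
have dotE (c : V) : \sum_(j < n) u 0 j * c 0 j = dot u c.
  by rewrite /dot mxE; apply: eq_bigr => j _; rewrite mxE.
rewrite inE; apply: (iffP forall_inP) => uC c cC; first by apply/eqP; rewrite -dotE uC.
by rewrite dotE uC.
Qed.

Lemma dotDl (u v c : V) : dot (u + v) c = dot u c + dot v c.
Proof. by rewrite /dot mulmxDl mxE. Qed.

Lemma dotBl (u v c : V) : dot (u - v) c = dot u c - dot v c.
Proof. by rewrite /dot mulmxBl !mxE. Qed.

Lemma dotZl r (u c : V) : dot (r *: u) c = r * dot u c.
Proof. by rewrite /dot -scalemxAl mxE. Qed.

Lemma dotDr (u c d : V) : dot u (c + d) = dot u c + dot u d.
Proof. by rewrite /dot linearD mulmxDr mxE. Qed.

Lemma dotZr r (u c : V) : dot u (r *: c) = r * dot u c.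
Proof. by rewrite /dot linearZ -scalemxAr mxE. Qed.

Lemma dot_delta j (c : V) : dot (delta_mx 0 j) c = c 0 j.
Proof. by rewrite /dot -rowE !mxE. Qed.

Lemma dual_code_linear (C : {set V}) : is_linear_code (dual_code C).
Proof.
split; first by apply/dual_codeP => c _; rewrite /dot mul0mx mxE.
split=> [x y /dual_codeP xC /dual_codeP yC | r x /dual_codeP xC];
  apply/dual_codeP => c cC.
  by rewrite dotDl xC // yC // addr0.
by rewrite dotZl xC // mulr0.
Qed.

Lemma full_code : is_linear_code [set: V].
Proof. by split; [rewrite inE | split=> *; rewrite inE]. Qed.

Lemma zero_code : is_linear_code [set 0 : V].
Proof.
split; first by rewrite inE.
split=> [x y | r x]; rewrite !inE => /eqP ->; first by rewrite add0r.
by rewrite scaler0.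
Qed.

Lemma mulmx_tr_eq0 k (G : 'M[R]_(k, n)) (h : V) :
  (h *m G^T == 0) = (h \in dual_code (rowspan G)).
Proof.
apply/eqP/dual_codeP => [hG _ /imsetP [u _ ->] | hG].
  by rewrite /dot trmx_mul mulmxA hG mul0mx mxE.
apply/rowP => j; rewrite [RHS]mxE -(hG (row j G)); last first.
  by apply/imsetP; exists (delta_mx 0 j); rewrite -?rowE.
by rewrite /dot tr_row colE mulmxA -colE [RHS]mxE.
Qed.

Variable M : {set R}.
Hypotheses (localM : local_with M) (annM_minimal : is_minimal_ideal (ann M)).

Lemma card_code_dual_le (C : {set V}) :
  is_linear_code C -> (#|C| * #|dual_code C| <= #|V|)%N.
Proof.
move=> codeC; pose form c := [ffun x : V => dot x c].
have form_inj : injective form.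
  move=> c d /ffunP eq_cd; apply/rowP => j.
  by have := eq_cd (delta_mx 0 j); rewrite !ffunE !dot_delta.
have le_C : (#|C| <= #|forms [set: V] (dual_code C)|)%N.
  rewrite -(card_imset _ form_inj).
  apply/subset_leq_card/subsetP => _ /imsetP [c cC ->].
  apply/formsP; split=> [x y _ _ | r x _ | x | x /dual_codeP xC]; rewrite ?ffunE.
  - exact: dotDl.
  - exact: dotZl.
  - by rewrite inE.
  - exact: xC.
have := card_forms_le localM annM_minimal (dual_code_linear C) full_code (subsetT _).
by rewrite cardsT; apply: leq_trans; rewrite leq_mul2r le_C orbT.
Qed.

Lemma card_code_dual_ge (C : {set V}) :
  is_linear_code C -> (#|V| <= #|C| * #|dual_code C|)%N.
Proof.
move=> codeC; pose restr u := [ffun x : V => if x \in C then dot u x else 0].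
have := @card_by_kernel _ _ [set: V] (dual_code C) restr
  (fun x y _ _ => in_setT _) (subsetT _).
rewrite cardsT => ->; last first.
  move=> u v _ _; apply/eqP/dual_codeP => [/ffunP eq_uv c cC | vu0].
    by have := eq_uv c; rewrite dotBl !ffunE cC => ->; rewrite subrr.
  apply/ffunP => x; rewrite !ffunE; case: ifP => // xC.
  by apply/eqP; rewrite -subr_eq0 -dotBl vu0.
rewrite leq_mul2r; apply/orP; right.
apply: leq_trans (card_forms_le localM annM_minimal zero_code codeC _); last first.
  by rewrite sub1set codeC.1.
rewrite cards1 muln1; apply/subset_leq_card/subsetP => _ /imsetP [u _ ->].
apply/formsP; split=> [x y xC yC | r x xC | x xC | x]; rewrite !ffunE.
- by rewrite xC yC codeC.2.1 // dotDr.
- by rewrite xC codeC.2.2 // dotZr.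
- by rewrite (negPf xC).
- by rewrite inE => /eqP ->; rewrite codeC.1 /dot linear0 mulmx0 mxE.
Qed.

Lemma card_dual_code (C : {set V}) :
  is_linear_code C -> (#|C| * #|dual_code C|)%N = #|V|.
Proof.
by move=> codeC; apply/eqP; rewrite eqn_leq card_code_dual_le ?card_code_dual_ge.
Qed.

End DualCode.

Section CodeIntersection.
Variables (R : finComUnitRingType) (n : nat).
Local Notation V := 'rV[R]_n.

Lemma card_code_gt0 (C : {set V}) : is_linear_code C -> (0 < #|C|)%N.
Proof. by move=> codeC; apply/card_gt0P; exists 0; apply: codeC.1. Qed.

Lemma rowspan_code k (A : 'M[R]_(k, n)) : is_linear_code (rowspan A).
Proof.
split; first by apply/imsetP; exists 0; rewrite ?mul0mx.
split=> [_ _ /imsetP [u _ ->] /imsetP [v _ ->] | r _ /imsetP [u _ ->]]; apply/imsetP.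
  by exists (u + v); rewrite ?mulmxDl.
by exists (r *: u); rewrite ?scalemxAl.
Qed.

Lemma setI_code (C D : {set V}) :
  is_linear_code C -> is_linear_code D -> is_linear_code (C :&: D).
Proof.
move=> [C0 [addC scaleC]] [D0 [addD scaleD]]; split; first by rewrite inE C0 D0.
split=> [x y | r x]; rewrite !inE => /andP [xC xD]; last by rewrite scaleC ?scaleD.
by move=> /andP [yC yD]; rewrite addC ?addD.
Qed.

Definition code_sum (C D : {set V}) : {set V} := [set p.1 + p.2 | p in setX C D].

Lemma code_sum_code (C D : {set V}) :
  is_linear_code C -> is_linear_code D -> is_linear_code (code_sum C D).
Proof.
move=> [C0 [addC scaleC]] [D0 [addD scaleD]].
split; first by apply/imsetP; exists (0, 0); rewrite ?inE ?C0 ?D0 //= addr0.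
split=> [_ _ /imsetP [[c d] /setXP [cC dD] ->] /imsetP [[c' d'] /setXP [c'C d'D] ->]
        | r _ /imsetP [[c d] /setXP [cC dD] ->]]; apply/imsetP.
  by exists (c + c', d + d'); rewrite ?inE ?addC ?addD //= addrACA.
by exists (r *: c, r *: d); rewrite ?inE ?scaleC ?scaleD //= scalerDr.
Qed.

Lemma dual_code_sum (C D : {set V}) :
  is_linear_code C -> is_linear_code D ->
  dual_code (code_sum C D) = dual_code C :&: dual_code D.
Proof.
move=> codeC codeD; apply/setP => u; rewrite in_setI.
apply/dual_codeP/andP => [uCD | [/dual_codeP uC /dual_codeP uD]].
  split; apply/dual_codeP => c cC; apply: uCD; apply/imsetP.
    by exists (c, 0); rewrite ?inE ?cC ?codeD.1 //= addr0.
  by exists (0, c); rewrite ?inE ?cC ?codeC.1 //= add0r.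
by move=> _ /imsetP [[c d] /setXP [cC dD] ->]; rewrite dotDr uC // uD // addr0.
Qed.

Lemma card_code_sum (C D : {set V}) :
  is_linear_code C -> is_linear_code D ->
  (#|C| * #|D| = #|code_sum C D| * #|C :&: D|)%N.
Proof.
move=> codeC codeD; rewrite -cardsX.
apply: card_uniform_fibres => -[c d] /setXP [cC dD].
have -> : [set p in setX C D | p.1 + p.2 == c + d]
          = (fun z => (c + z, d - z)) @: (C :&: D).
  apply/setP => -[c' d']; rewrite !inE /=.
  apply/andP/imsetP => [[/andP [c'C d'D] /eqP eq_sum] | [z /setIP [zC zD] [-> ->]]].
    have eq_diff : c' - c = d - d'.
      by apply: (addIr d'); rewrite subrK addrAC eq_sum addrAC subrr add0r.
    have zD : c' - c \in D by rewrite eq_diff code_sub.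
    exists (c' - c); first by rewrite inE code_sub.
    by congr pair; [rewrite addrC subrK | rewrite eq_diff opprB addrC subrK].
  rewrite codeC.2.1 // code_sub //; split=> //.
  by rewrite addrACA subrr addr0.
by apply: card_imset => z z' [] /addrI.
Qed.

Lemma card_dual_mulmx_tr k1 m2 (C1 C2 : {set V})
    (G1 : 'M[R]_(k1, n)) (H2 : 'M[R]_(m2, n)) :
  rowspan G1 = C1 -> rowspan H2 = dual_code C2 ->
  #|dual_code C2| = (#|rowspan (H2 *m G1^T)| * #|dual_code C1 :&: dual_code C2|)%N.
Proof.
move=> genG1 genH2; have [_ [addD _]] := dual_code_linear C2.
have -> : rowspan (H2 *m G1^T) = (mulmx^~ G1^T) @: dual_code C2.
  by rewrite -genH2 /rowspan -imset_comp; apply: eq_imset => u /=; rewrite mulmxA.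
apply: card_by_kernel => [| | x y xD yD]; [exact: addD | exact: subsetIr |].
have yxD : y - x \in dual_code C2 by apply: code_sub => //; apply: dual_code_linear.
by rewrite -subr_eq0 -mulmxBl mulmx_tr_eq0 genG1 in_setI yxD andbT.
Qed.

Variable M : {set R}.
Hypotheses (localM : local_with M) (annM_minimal : is_minimal_ideal (ann M)).

Lemma card_code_cap k1 m2 (C1 C2 : {set V})
    (G1 : 'M[R]_(k1, n)) (H2 : 'M[R]_(m2, n)) :
  is_linear_code C1 -> is_linear_code C2 ->
  rowspan G1 = C1 -> rowspan H2 = dual_code C2 ->
  #|C1| = (#|rowspan (H2 *m G1^T)| * #|C1 :&: C2|)%N.
Proof.
move=> codeC1 codeC2 genG1 genH2.
have codeS := code_sum_code codeC1 codeC2.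
have dualS := card_dual_code localM annM_minimal codeS.
have dualC2 := card_dual_code localM annM_minimal codeC2.
have sumC12 := card_code_sum codeC1 codeC2.
have := card_dual_mulmx_tr genG1 genH2; rewrite -dual_code_sum // => dual_image.
have pos : (0 < #|C2| * #|dual_code (code_sum C1 C2)|)%N.
  by rewrite muln_gt0 !card_code_gt0 //; apply: dual_code_linear.
apply/eqP; rewrite -(eqn_pmul2r pos) mulnA sumC12 mulnAC dualS -dualC2 dual_image.
apply/eqP; lia.
Qed.

End CodeIntersection.

Lemma logq_mul q a b :
  (0 < a)%N -> (0 < b)%N -> logq q (a * b) = Rplus (logq q a) (logq q b).
Proof.
move=> a_gt0 b_gt0; rewrite /logq mult_INR ln_mult ?Rdiv_plus_distr //;
by apply: lt_0_INR; apply/ltP.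
Qed.

Theorem theorem3p10 (R : finComUnitRingType) (M : {set R}) (q : nat)
  (hFrob : local_frobenius M)
  (hq : #|[set: R]| = (q * #|M|)%N)
  (l n k1 k2 m1 m2 : nat)
  (C1 C2 : {set 'rV[R]_n})
  (G1 : 'M[R]_(k1, n)) (G2 : 'M[R]_(k2, n))
  (H1 : 'M[R]_(m1, n)) (H2 : 'M[R]_(m2, n))
  (hC1 : is_linear_code C1) (hC2 : is_linear_code C2)
  (hG1 : is_generator_matrix G1 C1) (hG2 : is_generator_matrix G2 C2)
  (hH1 : is_parity_check_matrix H1 C1) (hH2 : is_parity_check_matrix H2 C2) :
  DLIP q l C1 C2 <->
  (Rankq q (mulmx H2 (trmx G1)) = Rminus (Rankq q G1) (INR l) \/
   Rankq q (mulmx H1 (trmx G2)) = Rminus (Rankq q G2) (INR l)).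
Proof.
have [localM annM_minimal] := hFrob.
have cap1 := card_code_cap localM annM_minimal hC1 hC2 hG1 hH2.
have cap2 := card_code_cap localM annM_minimal hC2 hC1 hG2 hH1.
rewrite setIC in cap2.
have cap_gt0 := card_code_gt0 (setI_code hC1 hC2).
have span_gt0 k m (A : 'M[R]_(k, m)) := card_code_gt0 (rowspan_code A).
rewrite /DLIP /dimq /Rankq hG1 hG2 cap1 cap2 !logq_mul ?span_gt0 //.
split=> [dim_l | [rank_l | rank_l]]; [left | |]; lra.
Qed.
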